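(* Let $Y$ be a finite connected simple undirected graph with vertex set $\{1,\dots,n\}$, let $\pi\in S_Y$, and let $g,g'\in D_n$ with $g\neq g'$. If $[g\cdot\pi]_Y=[g'\cdot\pi]_Y$, then $Y$ is bipartite.
   Context: $S_Y$ denotes the set of permutations $\pi=(\pi_1,\dots,\pi_n)$ of the vertex set of $Y$. The update graph $U(Y)$ has vertex set $S_Y$, two permutations being adjacent if they differ exactly by swapping two consecutive entries $\pi_k,\pi_{k+1}$ with $\{\pi_k,\pi_{k+1}\}$ not an edge of $Y$; $\pi\sim_Y\pi'$ iff they lie in the same connected component of $U(Y)$, and $[\pi]_Y$ is the class of $\pi$. Let $\sigma=(n,n-1,\dots,2,1)$ and $\rho=(1,n)(2,n-1)\cdots(\lceil n/2\rceil,\lfloor n/2\rfloor+1)$ in $S_n$ (cycle notation), and $D_n=\langle\sigma,\rho\rangle$, acting on $S_Y$ by $g\cdot(\pi_1,\dots,\pi_n)=(\pi_{g^{-1}(1)},\dots,\pi_{g^{-1}(n)})$. Thus $\sigma\cdot\pi=(\pi_2,\dots,\pi_n,\pi_1)$ and $\rho\cdot\pi=(\pi_n,\dots,\pi_1)$. *)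

(* Graph Y on vertex set 'I_n (0-based stand-in for {1,...,n}),
   given as a boolean relation e. *)
From mathcomp Require Import all_boot all_fingroup.
Set Implicit Arguments. Unset Strict Implicit. Unset Printing Implicit Defensive.
Local Open Scope group_scope.

Definition simple_graph n (e : rel 'I_n) : Prop := symmetric e /\ irreflexive e.
Definition connected_graph n (e : rel 'I_n) : Prop := forall x y, connect e x y.
Definition bipartite n (e : rel 'I_n) : Prop :=
  exists c : 'I_n -> bool, forall x y, e x y -> c x != c y.

(* A permutation pi in S_Y is a perm sending position k to the entry pi_k. *)
Definition update_adj n (e : rel 'I_n) : rel {perm 'I_n} :=
  fun p q => [exists i : 'I_n, exists j : 'I_n,
     [&& val j == (val i).+1, ~~ e (p i) (p j) & q == tperm i j * p]].

(* pi ~_Y pi'  iff same connected component of U(Y), i.e. [pi]_Y = [pi']_Y *)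
Definition upd_equiv n (e : rel 'I_n) (p q : {perm 'I_n}) : bool :=
  connect (update_adj e) p q.

(* sigma = (n, n-1, ..., 1): i |-> i-1 cyclically; rho: i |-> n+1-i *)
Definition sigma_n n : {perm 'I_n} := perm (@ord_pred_inj n).
Definition rho_n n : {perm 'I_n} := perm (@rev_ord_inj n).
Definition dihedral n : {set {perm 'I_n}} := <<[set sigma_n n; rho_n n]>>.

(* g . pi = (pi_{g^-1(1)}, ..., pi_{g^-1(n)}), i.e. k |-> pi (g^-1 k);
   in mathcomp (s * t) x = t (s x). *)
Definition dact n (g p : {perm 'I_n}) : {perm 'I_n} := g^-1 * p.

From mathcomp Require Import all_boot all_fingroup ssralg zmodp zify.
Set Implicit Arguments. Unset Strict Implicit. Unset Printing Implicit Defensive.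
Import GRing.Theory.
Local Open Scope group_scope.

(* An update move never swaps two adjacent vertices of Y, so the relative
   order in which the endpoints of each edge appear (the acyclic orientation
   of Y induced by pi) is an invariant of the class [pi]_Y.  The positions of
   the vertices in g.pi are those in pi moved by g, and D_n acts on positions
   as the isometries k |-> k + c and k |-> c - k of Z/n.  Hence h = g^-1 g'
   is a nontrivial isometry preserving the order of the positions of the
   endpoints of every edge.  A rotation by c <> 0 reverses exactly the pairs
   separated by the cut {k < n - c}, so no edge crosses that cut, which
   contradicts connectivity.  A reflection k |-> c - k reverses every pair on
   the same side of the cut {k <= c}, so every edge crosses it: this cut is a
   bipartition of Y. *)

Section UpdateInvariant.
Variables (n : nat) (e : rel 'I_n).
Hypothesis e_sym : symmetric e.

Lemma update_adj_edge_order (q q' : {perm 'I_n}) a b :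
  update_adj e q q' -> e a b -> (q^-1 a < q^-1 b)%N = (q'^-1 a < q'^-1 b)%N.
Proof.
move=> /existsP[i /existsP[j /and3P[/eqP ji nij /eqP ->]]].
rewrite -[a](permKV q) -[b](permKV q) invMg tpermV !permM !permK.
move: (q^-1 a) (q^-1 b) => x y.
have {}ji : nat_of_ord j = i.+1 := ji.
have neq_val (u v : 'I_n) : u <> v -> nat_of_ord u <> v by move=> + /ord_inj.
case: (tpermP i j x) => [->|->|/neq_val xi /neq_val xj];
  case: (tpermP i j y) => [->|->|/neq_val yi /neq_val yj] exy;
  try by [rewrite exy in nij | rewrite e_sym exy in nij].
all: lia.
Qed.

Lemma upd_equiv_edge_order (p q : {perm 'I_n}) a b :
  upd_equiv e p q -> e a b -> (p^-1 a < p^-1 b)%N = (q^-1 a < q^-1 b)%N.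
Proof.
move=> pq eab; pose A := [pred r : {perm 'I_n} | (r^-1 a < r^-1 b)%N].
have closedA : closed (update_adj e) A.
  by move=> r r' rr'; exact: update_adj_edge_order rr' eab.
by have := closed_connect closedA pq; rewrite !inE.
Qed.

End UpdateInvariant.

Section CyclicIsometries.
Variable n : nat.
Implicit Types (x y c k : 'I_n.+1) (h : {perm 'I_n.+1}).

Lemma Zp_add_val x y :
  nat_of_ord (x + y)%R = if (x + y < n.+1)%N then (x + y)%N else (x + y - n.+1)%N.
Proof.
rewrite /= -[in LHS](modZp x) -[in LHS](modZp y) modnDm.
case: ltnP => [/modn_small //| le_n_xy].
rewrite -[in LHS](subnK le_n_xy) modnDr modn_small //.
by have := ltn_ord x; have := ltn_ord y; lia.
Qed.

Lemma Zp_sub_val x y :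
  nat_of_ord (x - y)%R = if (y <= x)%N then (x - y)%N else (x + n.+1 - y)%N.
Proof.
have := Zp_add_val (x - y)%R y; rewrite subrK.
have := ltn_ord (x - y)%R; have := ltn_ord x; have := ltn_ord y.
case: ifP; case: ifP; lia.
Qed.

Definition rotation h c := [forall k, h k == (k + c)%R].
Definition reflection h c := [forall k, h k == (c - k)%R].
Definition cyclic_isometries := [set h | [exists c, rotation h c || reflection h c]].

Lemma cyclic_isometries_group : group_set cyclic_isometries.
Proof.
apply/andP; split.
  rewrite inE; apply/existsP; exists 0%R; apply/orP; left.
  by apply/eqfunP => k; rewrite perm1 addr0.
apply/subsetP => h /mulsgP[h1 h2]; rewrite !inE.
move=> /existsP[c /orP[]/eqfunP H1] /existsP[d /orP[]/eqfunP H2] ->;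
  apply/existsP.
- by exists (c + d)%R; apply/orP; left; apply/eqfunP => k;
    rewrite permM H1 H2 addrA.
- by exists (d - c)%R; apply/orP; right; apply/eqfunP => k;
    rewrite permM H1 H2 opprD addrA addrAC.
- by exists (c + d)%R; apply/orP; right; apply/eqfunP => k;
    rewrite permM H1 H2 addrAC.
- by exists (d - c)%R; apply/orP; left; apply/eqfunP => k;
    rewrite permM H1 H2 opprB addrCA.
Qed.

Lemma dihedral_sub_cyclic_isometries : dihedral n.+1 \subset cyclic_isometries.
Proof.
rewrite (gen_subG _ (Group cyclic_isometries_group)) subUset !sub1set !inE.
apply/andP; split; apply/existsP; exists ord_max; apply/orP; [left|right];
  apply/eqfunP => k; apply: ord_inj.
  by rewrite /sigma_n permE /= addnS.
by rewrite /rho_n permE Zp_sub_val -ltnS ltn_ord /= subSS.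
Qed.

End CyclicIsometries.

Definition preserves_edge_order n (e : rel 'I_n) (f h : {perm 'I_n}) :=
  forall a b, e a b -> (f a < f b)%N = (h (f a) < h (f b))%N.

Section EdgeOrder.
Variables (n : nat) (e : rel 'I_n.+1) (f h : {perm 'I_n.+1}) (c : 'I_n.+1).
Hypothesis h_preserves : preserves_edge_order e f h.

Lemma rotation_preserving_edge_order_trivial :
  connected_graph e -> rotation h c -> h = 1.
Proof.
move=> conn /eqfunP rot.
suff c0 : c = 0%R by apply/permP => k; rewrite rot c0 addr0 perm1.
apply: ord_inj; apply/eqP; rewrite /= -leqn0 leqNgt; apply/negP => c_gt0.
pose low := [pred a | (f a + c < n.+1)%N].
have low_closed : closed e low.
  move=> a b eab; rewrite !inE; move: (h_preserves eab); rewrite !rot !Zp_add_val.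
  have := ltn_ord (f a); have := ltn_ord (f b).
  by case: (ltnP (f a + c) n.+1); case: (ltnP (f b + c) n.+1); lia.
have := closed_connect low_closed (conn (f^-1 ord0) (f^-1 ord_max)).
by rewrite !inE !permKV /=; have := ltn_ord c; lia.
Qed.

Lemma reflection_preserving_edge_order_bipartite :
  irreflexive e -> reflection h c -> bipartite e.
Proof.
move=> irr /eqfunP refl; exists (fun a => (f a <= c)%N) => a b eab.
apply/negP => /eqP same_side.
have fab : nat_of_ord (f a) = f b.
  move: same_side (h_preserves eab); rewrite !refl !Zp_sub_val.
  have := ltn_ord (f a); have := ltn_ord (f b).
  by case: (leqP (f a) c); case: (leqP (f b) c); lia.
by move: eab; rewrite (perm_inj (ord_inj fab)) irr.
Qed.

End EdgeOrder.

Theorem proposition2 (n : nat) (e : rel 'I_n) (pi g g' : {perm 'I_n}) :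
  simple_graph e -> connected_graph e ->
  g \in dihedral n -> g' \in dihedral n -> g != g' ->
  upd_equiv e (dact g pi) (dact g' pi) ->
  bipartite e.
Proof.
case: n e pi g g' => [|n] e pi g g'.
  by move=> *; exists (fun _ => true); case.
move=> [e_sym irr] conn gD g'D neq_gg' equiv.
have ordered : preserves_edge_order e (pi^-1 * g) (g^-1 * g').
  move=> a b eab; have := upd_equiv_edge_order e_sym equiv eab.
  by rewrite /dact !invMg !invgK !permM !permK.
have : g^-1 * g' \in cyclic_isometries n.
  by apply: (subsetP (dihedral_sub_cyclic_isometries n)); rewrite groupM ?groupV.
rewrite inE => /existsP[c /orP[rot | refl]].
- case/eqP: neq_gg'; apply/eqP.
  by rewrite eq_mulVg1 (rotation_preserving_edge_order_trivial ordered conn rot).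
- exact: reflection_preserving_edge_order_bipartite ordered irr refl.
Qed.
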